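(* Let $\rho$ be a bipartite state and let $\Lambda=\{\Pi_1,\dots\}$ and $\Lambda'=\{\Pi'_1,\dots\}$ be projective measurements on the first and second registers respectively, such that $\mathrm{Tr}[(\Pi_1\otimes\Pi'_1)\rho]\ge1-\varepsilon$. Let $M=\{M_i\}_{i\in\mathcal{I}}$ be a general measurement on the first register, fix $i\in\mathcal{I}$, let $p_i=\mathrm{Tr}[(M_i^\dagger M_i\otimes I)\rho]$ be the probability of outcome $i$, and let $\tau$ be the post-measurement state of the second register after applying $M$ to the first register of $\rho$ and obtaining outcome $i$. Then $\mathrm{Tr}[\Pi'_1\tau]\ge1-\frac{\sqrt{\varepsilon}}{p_i}$. *)

(* finite-dimensional quantum states over an abstract
   numeric algebraically closed field C (e.g. the complex numbers). *)
From mathcomp Require Import all_boot all_order all_algebra.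
From mathcomp Require Export mxtens.
Set Implicit Arguments. Unset Strict Implicit. Unset Printing Implicit Defensive.
Import Order.TTheory GRing.Theory Num.Theory.
Local Open Scope ring_scope.

Section Quantum.
Variable C : numClosedFieldType.

Definition adj {m n} (A : 'M[C]_(m, n)) : 'M[C]_(n, m) := map_mx Num.conj A^T.

Definition psd {n} (A : 'M[C]_n) : Prop :=
  adj A = A /\ forall v : 'cV[C]_n, 0 <= (adj v *m A *m v) 0 0.

Definition is_state {n} (rho : 'M[C]_n) : Prop := psd rho /\ \tr rho = 1.

Definition proj_meas {I : finType} {n} (P : I -> 'M[C]_n) : Prop :=
  (forall k, adj (P k) = P k /\ P k *m P k = P k) /\ \sum_k P k = 1%:M.

Definition gen_meas {J : finType} {n} (M : J -> 'M[C]_n) : Prop :=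
  \sum_j adj (M j) *m M j = 1%:M.

Definition ptrace1 {m n} (X : 'M[C]_(m * n)) : 'M[C]_n :=
  \matrix_(j, k) \sum_(a < m) X (mxtens_index (a, j)) (mxtens_index (a, k)).

Definition outcome_prob {J : finType} {m n} (M : J -> 'M[C]_m) (i : J)
  (rho : 'M[C]_(m * n)) : C :=
  \tr ((adj (M i) *m M i *t (1%:M : 'M[C]_n)) *m rho).

Definition post_state2 {J : finType} {m n} (M : J -> 'M[C]_m) (i : J)
  (rho : 'M[C]_(m * n)) : 'M[C]_n :=
  (outcome_prob M i rho)^-1 *:
    ptrace1 ((M i *t (1%:M : 'M[C]_n)) *m rho *m adj (M i *t (1%:M : 'M[C]_n))).
End Quantum.

(* The outcome-[i] weight of [rho] outside [Pi'_1] is at most the failure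
   probability of [Pi_1 (x) Pi'_1]: as operators,
   [M_i^* M_i (x) (1 - Pi'_1) <= 1 (x) (1 - Pi'_1) <= 1 - Pi_1 (x) Pi'_1].
   Hence [p_i (1 - Tr[Pi'_1 tau]) <= min(eps, 1) <= sqrt eps]; no gentle
   measurement argument is needed. *)
From mathcomp Require Import all_boot all_order all_algebra ring.
Import Order.TTheory GRing.Theory Num.Theory.
Local Open Scope ring_scope.

Section QuantumMeasurement.
Set Implicit Arguments.
Unset Strict Implicit.
Variable C : numClosedFieldType.

Lemma adjB k l (A B : 'M[C]_(k, l)) : adj (A - B) = adj A - adj B.
Proof. by rewrite /adj linearB /= map_mxB. Qed.

Lemma adj1 k : adj (1%:M : 'M[C]_k) = 1%:M.
Proof. by rewrite /adj trmx1 map_mx1. Qed.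

Lemma adjK k l (A : 'M[C]_(k, l)) : adj (adj A) = A.
Proof. by apply/matrixP=> i j; rewrite !mxE conjCK. Qed.

Lemma adj_tensmx k l p q (A : 'M[C]_(k, l)) (B : 'M[C]_(p, q)) :
  adj (A *t B) = adj A *t adj B.
Proof. by apply/matrixP=> i j; rewrite !mxE rmorphM. Qed.

Lemma tensmxBl k l p q (A B : 'M[C]_(k, l)) (D : 'M[C]_(p, q)) :
  (A - B) *t D = A *t D - B *t D.
Proof. by apply/matrixP=> i j; rewrite !mxE mulrBl. Qed.

Lemma tensmxBr k l p q (A : 'M[C]_(k, l)) (B D : 'M[C]_(p, q)) :
  A *t (B - D) = A *t B - A *t D.
Proof. by apply/matrixP=> i j; rewrite !mxE mulrBr. Qed.

Lemma tensmx_suml (J : finType) (P : pred J) k l p q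
    (A : J -> 'M[C]_(k, l)) (D : 'M[C]_(p, q)) :
  (\sum_(j | P j) A j) *t D = \sum_(j | P j) A j *t D.
Proof.
apply/matrixP=> i j; rewrite !mxE !summxE mulr_suml.
by apply: eq_bigr=> s _; rewrite !mxE.
Qed.

Lemma tensmx11 k l : (1%:M : 'M[C]_k) *t (1%:M : 'M[C]_l) = 1%:M.
Proof.
apply/matrixP=> i j.
case: (mxtens_indexP i)=> a b; case: (mxtens_indexP j)=> c d.
rewrite tensmxE !mxE (inj_eq (can_inj (@mxtens_indexK _ _))) xpair_eqE.
by case: eqP=> _; case: eqP=> _ /=; rewrite ?mulr1 ?mulr0 ?mul0r.
Qed.

Lemma sum_mxtens_index k l (F : 'I_(k * l) -> C) :
  \sum_r F r = \sum_(a < k) \sum_(b < l) F (mxtens_index (a, b)).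
Proof.
rewrite (reindex (@mxtens_index k l)) /=; last first.
  exact/onW_bij/(Bijective (@mxtens_indexK k l) (@mxtens_unindexK k l)).
by rewrite pair_big /=; apply: eq_bigr=> -[a b].
Qed.

Lemma mxtrace_mulmx_ptrace1 k l (Q : 'M[C]_l) (X : 'M[C]_(k * l)) :
  \tr (Q *m ptrace1 X) = \tr ((1%:M *t Q) *m X).
Proof.
have diagE a j : ((1%:M *t Q) *m X) (mxtens_index (a, j)) (mxtens_index (a, j))
    = \sum_(s < l) Q j s * X (mxtens_index (a, s)) (mxtens_index (a, j)).
  rewrite mxE sum_mxtens_index (bigD1 a) //= [X in _ + X]big1 ?addr0.
    by apply: eq_bigr=> s _; rewrite tensmxE mxE eqxx mul1r.
  move=> b /negPf nb; apply: big1=> s _.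
  by rewrite tensmxE mxE eq_sym nb /= !mul0r.
rewrite /mxtrace sum_mxtens_index.
under [RHS]eq_bigr=> a _ do under eq_bigr=> j _ do rewrite diagE.
rewrite exchange_big; apply: eq_bigr=> j _.
by rewrite mxE exchange_big; apply: eq_bigr=> s _; rewrite mxE mulr_sumr.
Qed.

Lemma psd_mxtrace_adjMM_ge0 k p (rho : 'M[C]_k) (B : 'M[C]_(p, k)) :
  psd rho -> 0 <= \tr (adj B *m B *m rho).
Proof.
move=> [_ rho_ge0]; rewrite -mulmxA mxtrace_mulC /mxtrace.
apply: sumr_ge0=> r _; have := rho_ge0 (adj (row r B)); rewrite adjK.
suff -> : (row r B *m rho *m adj (row r B)) 0 0 = (B *m rho *m adj B) r r by [].
rewrite !mxE; apply: eq_bigr=> s _; rewrite !mxE; congr (_ * _).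
by apply: eq_bigr=> t _; rewrite !mxE.
Qed.

Definition orthoproj k (A : 'M[C]_k) : Prop := adj A = A /\ A *m A = A.

Lemma orthoprojC k (A : 'M[C]_k) : orthoproj A -> orthoproj (1%:M - A).
Proof.
move=> [A_sa AA]; split; first by rewrite adjB adj1 A_sa.
by rewrite mulmxBl !mulmxBr !mul1mx mulmx1 AA subrr subr0.
Qed.

Lemma orthoproj_tensmx k l (A : 'M[C]_k) (B : 'M[C]_l) :
  orthoproj A -> orthoproj B -> orthoproj (A *t B).
Proof.
move=> [A_sa AA] [B_sa BB].
by split; rewrite ?adj_tensmx ?A_sa ?B_sa // tensmx_mul AA BB.
Qed.

Lemma orthoproj_adjMM k (A : 'M[C]_k) : orthoproj A -> adj A *m A = A.
Proof. by move=> [-> ->]. Qed.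

Lemma psd_mxtrace_orthoproj_ge0 k (rho : 'M[C]_k) (A : 'M[C]_k) :
  psd rho -> orthoproj A -> 0 <= \tr (A *m rho).
Proof. by move=> rho_psd /orthoproj_adjMM {1}<-; apply: psd_mxtrace_adjMM_ge0. Qed.

Lemma psd_mxtrace_orthoproj_le k (rho : 'M[C]_k) (A : 'M[C]_k) :
  psd rho -> orthoproj A -> \tr (A *m rho) <= \tr rho.
Proof.
move=> rho_psd /orthoprojC/(psd_mxtrace_orthoproj_ge0 rho_psd).
by rewrite mulmxBl mul1mx linearB subr_ge0.
Qed.

Section Bipartite.
Variables (m n : nat) (rho : 'M[C]_(m * n)).
Hypothesis rho_psd : psd rho.

Lemma mxtrace_post_state2 (J : finType) (M : J -> 'M[C]_m) (i : J) (Q : 'M[C]_n) :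
  \tr (Q *m post_state2 M i rho)
    = (outcome_prob M i rho)^-1 * \tr ((adj (M i) *m M i *t Q) *m rho).
Proof.
rewrite /post_state2 -scalemxAr mxtraceZ mxtrace_mulmx_ptrace1 !mulmxA.
by rewrite mxtrace_mulC !mulmxA adj_tensmx adj1 !tensmx_mul mul1mx !mulmx1.
Qed.

Lemma gen_meas_mxtrace_compl_ge0 (J : finType) (M : J -> 'M[C]_m) (i : J)
    (Q : 'M[C]_n) :
  gen_meas M -> orthoproj Q ->
  0 <= \tr (((1%:M - adj (M i) *m M i) *t Q) *m rho).
Proof.
move=> sumM [Q_sa QQ].
have -> : 1%:M - adj (M i) *m M i = \sum_(j | j != i) adj (M j) *m M j.
  by rewrite -sumM (bigD1 i) //= addrC addrK.
rewrite tensmx_suml mulmx_suml raddf_sum; apply: sumr_ge0=> j _.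
have -> : adj (M j) *m M j *t Q = adj (M j *t Q) *m (M j *t Q).
  by rewrite adj_tensmx Q_sa tensmx_mul QQ.
exact: psd_mxtrace_adjMM_ge0.
Qed.

Lemma gen_meas_mxtrace_complr_le (J : finType) (M : J -> 'M[C]_m) (i : J)
    (P : 'M[C]_m) (Q : 'M[C]_n) :
  gen_meas M -> orthoproj P -> orthoproj Q ->
  \tr ((adj (M i) *m M i *t (1%:M - Q)) *m rho)
    <= \tr rho - \tr ((P *t Q) *m rho).
Proof.
move=> sumM projP projQ; set E := adj (M i) *m M i.
pose f A B := \tr ((A *t B) *m rho).
have fBl A B D : f (A - B) D = f A D - f B D by rewrite /f tensmxBl mulmxBl raddfB.
have fBr A B D : f A (B - D) = f A B - f A D by rewrite /f tensmxBr mulmxBl raddfB.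
have f11 : f 1%:M 1%:M = \tr rho by rewrite /f tensmx11 mul1mx.
have PcQ_ge0 : 0 <= f (1%:M - P) Q.
  exact/psd_mxtrace_orthoproj_ge0/orthoproj_tensmx/projQ/orthoprojC.
have EcQc_ge0 : 0 <= f (1%:M - E) (1%:M - Q).
  exact/gen_meas_mxtrace_compl_ge0/orthoprojC.
rewrite -subr_ge0 -f11.
have -> : f 1%:M 1%:M - f P Q - f E (1%:M - Q)
    = f (1%:M - P) Q + f (1%:M - E) (1%:M - Q) by rewrite !fBl !fBr; ring.
exact: addr_ge0.
Qed.

End Bipartite.

Lemma le_sqrtC_min (x y : C) : 0 <= x -> x <= 1 -> x <= y -> x <= sqrtC y.
Proof.
move=> x_ge0 x_le1 x_le_y; have y_ge0 := le_trans x_ge0 x_le_y.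
case/orP: (real_leVge (ger0_real y_ge0) (@real1 C)) => [y_le1 | y_ge1].
  apply: le_trans x_le_y _; rewrite -{1}(sqrtCK y) expr2 ler_piMr ?sqrtC_ge0 //.
  by rewrite -(sqrtC1 C) ler_sqrtC ?nnegrE.
by apply: le_trans x_le1 _; rewrite -(sqrtC1 C) ler_sqrtC ?nnegrE.
Qed.

End QuantumMeasurement.

Theorem mainTheorem9 (C : numClosedFieldType) (m n : nat)
  (rho : 'M[C]_(m * n)) (I I' J : finType)
  (Pi : I -> 'M[C]_m) (Pi' : I' -> 'M[C]_n) (i1 : I) (i1' : I')
  (M : J -> 'M[C]_m) (i : J) (eps : C) :
  is_state rho -> proj_meas Pi -> proj_meas Pi' ->
  1 - eps <= \tr ((Pi i1 *t Pi' i1') *m rho) ->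
  gen_meas M ->
  0 < outcome_prob M i rho ->
  1 - sqrtC eps / outcome_prob M i rho <= \tr (Pi' i1' *m post_state2 M i rho).
Proof.
move=> [rho_psd tr_rho] [projPi _] [projPi' _] success sumM p_gt0.
have projP : orthoproj (Pi i1) := projPi i1.
have projQ : orthoproj (Pi' i1') := projPi' i1'.
set p := outcome_prob M i rho; set q := \tr ((Pi i1 *t Pi' i1') *m rho).
set w := \tr ((adj (M i) *m M i *t Pi' i1') *m rho).
have p_w_le : p - w <= 1 - q.
  have -> : p - w = \tr ((adj (M i) *m M i *t (1%:M - Pi' i1')) *m rho).
    by rewrite tensmxBr mulmxBl raddfB.
  by have := gen_meas_mxtrace_complr_le rho_psd i sumM projP projQ; rewrite tr_rho.
have projPQ := orthoproj_tensmx projP projQ.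
have failure_le : 1 - q <= sqrtC eps.
  apply: le_sqrtC_min; last by rewrite lerBlDl -lerBlDr.
    by rewrite subr_ge0 -tr_rho (psd_mxtrace_orthoproj_le rho_psd projPQ).
  by rewrite lerBlDr lerDl (psd_mxtrace_orthoproj_ge0 rho_psd projPQ).
rewrite mxtrace_post_state2 -/p -/w [p^-1 * w]mulrC lerBlDr -mulrDl.
by rewrite ler_pdivlMr // mul1r -lerBlDl (le_trans p_w_le).
Qed.
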